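(* Fix integers $n\ge 1$, $m\ge 2$ and $k\in\{0,\dots,n-1\}$, and let $\mathcal{C}^k_{ac}$ be the class of all complete acyclic $k$-bounded CP-nets over $n$ variables, each of domain size $m$, viewed as concepts over the instance space $\mathcal{X}_{swap}$. Then: (1) $\mathrm{VCD}(\mathcal{C}^{n-1}_{ac})=m^n-1$; (2) $\mathrm{VCD}(\mathcal{C}^{0}_{ac})=(m-1)n$; (3) $\mathrm{VCD}(\mathcal{C}^{k}_{ac})\ge (m-1)\mathcal{M}_k=(m-1)(n-k)m^k+m^k-1$.
   Context: Variables $V=\{v_1,\dots,v_n\}$, each $v_i$ with a finite domain $D_{v_i}$ of size $m$. An outcome is an assignment of a value to every variable; $\mathcal{O}$ is the set of outcomes, and for $X\subseteq V$, $\mathcal{O}_X$ is the set of assignments to $X$ and $o[X]$ the projection of $o$ onto $X$. A CP-net $N$ specifies for each $v_i$ a parent set $Pa(v_i)\subseteq V\setminus\{v_i\}$ and a conditional preference table $\mathrm{CPT}(v_i)$ which, for each context $\gamma\in\mathcal{O}_{Pa(v_i)}$, either gives a strict total order $\succ^{v_i}_\gamma$ on $D_{v_i}$ (a ''statement'') or gives nothing. $N$ is complete if every CPT gives an order for every context. CP-nets are taken in minimal form: every parent actually affects the preferences of its child (no dummy parents). The graph of $N$ has an edge $(v_j,v_i)$ iff $v_j\in Pa(v_i)$; $N$ is acyclic if this graph is acyclic and $k$-bounded if $|Pa(v_i)|\le k$ for all $i$. For outcomes $o,o'$ differing only in $v_i$, with $\gamma=o[Pa(v_i)]$, going from $o$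 to $o'$ is an improving flip if $\succ^{v_i}_\gamma$ is given and $o'[v_i]\succ^{v_i}_\gamma o[v_i]$; $N$ induces the relation $o'\succ o$ iff there is a nonempty finite sequence of improving flips from $o$ to $o'$. A swap is an ordered pair $x=(x.1,x.2)$ of outcomes differing in exactly one variable. $\mathcal{X}_{swap}$ is a fixed set of swaps containing, for each unordered pair of outcomes differing in exactly one variable, exactly one of the two ordered pairs (the choice is arbitrary but fixed). A CP-net $N$ is identified with the concept $c_N$ given by $c_N(x)=1$ if $x.1\succ x.2$ under $N$ and $c_N(x)=0$ otherwise. A set $Y$ of instances is shattered by a concept class if every labeling of $Y$ is realized by some concept of the class; $\mathrm{VCD}$ is the largest size of a shattered set. $\mathcal{M}_k=(n-k)m^k+\frac{m^k-1}{m-1}$. *)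

From mathcomp Require Import all_boot all_order fingroup perm.
Set Implicit Arguments. Unset Strict Implicit. Unset Printing Implicit Defensive.

Definition outcome (n m : nat) := {ffun 'I_n -> 'I_m}.

(* The CPT of v_i
   is given as a function of the whole outcome, required (well-formedness)
   to depend only on the projection onto Pa(v_i); the strict total order
   ≻ on 'I_m is encoded by a ranking permutation r:  x ≻ y  iff  r x < r y. *)
Record CPnet (n m : nat) := mkCPnet {
  Pa  : 'I_n -> {set 'I_n};
  cpt : 'I_n -> outcome n m -> {perm 'I_m} }.

Definition prefers (m : nat) (r : {perm 'I_m}) (x y : 'I_m) : bool := r x < r y.

Definition differ_only_at n m (i : 'I_n) (o o' : outcome n m) : bool :=
  [forall l, (l != i) ==> (o l == o' l)] && (o i != o' i).

Definition is_swap n m (o o' : outcome n m) : bool :=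
  [exists i, differ_only_at i o o'].

Definition wf_cpnet n m (N : CPnet n m) : Prop :=
  (forall i, i \notin Pa N i) /\
  (forall i (o o' : outcome n m),
      (forall j, j \in Pa N i -> o j = o' j) -> cpt N i o = cpt N i o') /\
  (forall i j, j \in Pa N i ->
      exists o o' : outcome n m,
        (forall l, l != j -> o l = o' l) /\ cpt N i o <> cpt N i o').

Definition cp_edge n m (N : CPnet n m) : rel 'I_n := fun j i => j \in Pa N i.

Definition acyclic_cpnet n m (N : CPnet n m) : Prop :=
  forall i j, cp_edge N j i -> ~~ connect (cp_edge N) i j.

Definition k_bounded n m (k : nat) (N : CPnet n m) : Prop :=
  forall i, #|Pa N i| <= k.

Definition improving_flip n m (N : CPnet n m) : rel (outcome n m) :=
  fun o o' => [exists i, differ_only_at i o o' && prefers (cpt N i o) (o' i) (o i)].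

Definition cp_better n m (N : CPnet n m) (o' o : outcome n m) : bool :=
  [exists o1, improving_flip N o o1 && connect (improving_flip N) o1 o'].

Definition concept n m (N : CPnet n m) (x : outcome n m * outcome n m) : bool :=
  cp_better N x.1 x.2.

Definition in_Cac n m (k : nat) (N : CPnet n m) : Prop :=
  wf_cpnet N /\ acyclic_cpnet N /\ k_bounded k N.

Definition swap_space n m (X : {set outcome n m * outcome n m}) : Prop :=
  (forall x, x \in X -> is_swap x.1 x.2) /\
  (forall o o' : outcome n m, is_swap o o' ->
      ((o, o') \in X) (+) ((o', o) \in X)).

Definition shattered n m (k : nat) (Y : {set outcome n m * outcome n m}) : Prop :=
  forall f : outcome n m * outcome n m -> bool,
    exists N : CPnet n m, in_Cac k N /\ forall x, x \in Y -> concept N x = f x.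

(* VC dimension of C^k_ac over instance space X:  VCD_is k X d  means d is
   the largest size of a subset of X shattered by C^k_ac (a maximum exists
   since X is finite and the empty set is shattered). *)
Definition VCD_is n m (k : nat) (X : {set outcome n m * outcome n m}) (d : nat) : Prop :=
  (exists Y : {set outcome n m * outcome n m},
      Y \subset X /\ shattered k Y /\ #|Y| = d) /\
  (forall Y : {set outcome n m * outcome n m},
      Y \subset X -> shattered k Y -> #|Y| <= d).

Definition VCD_ge n m (k : nat) (X : {set outcome n m * outcome n m}) (b : nat) : Prop :=
  exists Y : {set outcome n m * outcome n m},
    Y \subset X /\ shattered k Y /\ b <= #|Y|.

(* In an acyclic CP-net the potential
     sum_l B ^ #|descendants of l| * (rank of o l in the CPT of l),   B = n m + 1,
   strictly decreases along improving flips: a flip lowers the rank of the flipped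
   variable, which costs its weight, and can only raise the ranks of its children,
   whose weights sum to less.  So on a swap the concept is decided by comparing
   potentials, and a shattered set of swaps, seen as a graph on outcomes, can be
   oriented arbitrarily by potentials.  It therefore has no cycle: it is a forest,
   with at most m ^ n - 1 edges.  When k = 0 each variable has a fixed order on its
   domain, and the same forest argument on the domain bounds the swaps of each
   variable by m - 1.
   Lower bound.  Let the parents of v_i be the first min(i, k) variables and take,
   for every context of them and every a < m - 1, the swap of v_i between a and a + 1
   (other variables 0).  These are (m - 1) M_k swaps, and every labelling of them is
   realised, because any prescribed comparisons between consecutive values extend
   to a total order. *)

From mathcomp Require Import all_boot fingroup perm.
From mathcomp Require Import zify.
Set Implicit Arguments. Unset Strict Implicit. Unset Printing Implicit Defensive.

Lemma homo_connect (T : finType) (U : Type) (e : rel T) (r : rel U) (f : T -> U) :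
  reflexive r -> transitive r ->
  {homo f : x y / e x y >-> r x y} -> {homo f : x y / connect e x y >-> r x y}.
Proof.
move=> r_refl r_trans f_homo x y /connectP[p + ->]; elim: p x => //= z p IH x.
by case/andP=> /f_homo xz /IH; apply: r_trans.
Qed.

Section Swaps.
Variables n m : nat.
Implicit Types (o : outcome n m) (N : CPnet n m).

Lemma differ_only_at_agree i o o' :
  differ_only_at i o o' -> (forall l, l != i -> o l = o' l) /\ o i != o' i.
Proof. by case/andP=> /forallP agree ->; split=> // l /(implyP (agree l))/eqP. Qed.

Lemma differ_only_atC i o o' : differ_only_at i o o' = differ_only_at i o' o.
Proof.
rewrite /differ_only_at [o' i == _]eq_sym; congr andb; apply/eq_forallb => l.
by rewrite [o' l == _]eq_sym.
Qed.

Lemma differ_only_at_uniq i j o o' :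
  differ_only_at i o o' -> differ_only_at j o o' -> i = j.
Proof.
move=> /differ_only_at_agree[agree _] /differ_only_at_agree[_ neq].
by apply/eqP; apply: contraNT neq => ji; rewrite agree // eq_sym.
Qed.

Lemma prefersNC (r : {perm 'I_m}) x y : x != y -> prefers r x y = ~~ prefers r y x.
Proof.
rewrite /prefers -(inj_eq (@perm_inj _ r)) -(inj_eq val_inj).
by case: ltngtP.
Qed.

Lemma cpt_differ_only_at N i l o o' : wf_cpnet N ->
  differ_only_at i o o' -> i \notin Pa N l -> cpt N l o = cpt N l o'.
Proof.
move=> [_ [local _]] /differ_only_at_agree[agree _] iNl; apply: local => j jl.
by apply: agree; apply: contraNneq iNl => <-.
Qed.

Lemma improving_flip_at N i o o' : differ_only_at i o o' ->
  improving_flip N o o' = prefers (cpt N i o) (o' i) (o i).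
Proof.
move=> dio; apply/existsP/idP => [[j /andP[djo]]|]; last by exists i; rewrite dio.
by rewrite (differ_only_at_uniq djo dio).
Qed.

End Swaps.

Section Potential.
Variables (n m : nat) (N : CPnet n m).
Hypotheses (wfN : wf_cpnet N) (acN : acyclic_cpnet N).
Implicit Types o : outcome n m.

Definition cp_descendants i := [set l | connect (cp_edge N) i l].
Definition cp_weight i := (n * m).+1 ^ #|cp_descendants i|.
Definition cp_rank l o : nat := cpt N l o (o l).
Definition cp_potential o := \sum_(l < n) cp_weight l * cp_rank l o.

Lemma parent_weight i l : i \in Pa N l -> cp_weight l * (n * m).+1 <= cp_weight i.
Proof.
move=> il; rewrite /cp_weight -expnSr leq_pexp2l //; apply: proper_card.
apply/properP; split.
  by apply/subsetP => j; rewrite !inE; apply: connect_trans; apply: connect1.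
by exists i; rewrite inE ?connect0 //; apply: acN.
Qed.

Lemma children_weight_lt i : \sum_(l < n | i \in Pa N l) cp_weight l * m < cp_weight i.
Proof.
rewrite -(ltn_pmul2r (ltn0Sn (n * m))) [X in _ < X]mulnC.
apply: (@leq_ltn_trans (n * m * cp_weight i)); last first.
  by rewrite ltn_pmul2r // /cp_weight expn_gt0.
rewrite big_distrl /=; apply: (@leq_trans (\sum_(l < n) m * cp_weight i)).
  rewrite big_mkcond /=; apply: leq_sum => l _; case: ifP => // il.
  by rewrite mulnAC mulnC leq_mul2l parent_weight ?orbT.
by rewrite sum_nat_const card_ord mulnA.
Qed.

Lemma potential_flip o o' : improving_flip N o o' -> cp_potential o' < cp_potential o.
Proof.
case/existsP=> i /andP[dio better].
have [agree _] := differ_only_at_agree dio.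
pose children := \sum_(l < n | i \in Pa N l) cp_weight l * m.
suff : cp_potential o' + cp_weight i <= cp_potential o + children.
  by have := children_weight_lt i; rewrite -/children; lia.
have -> : cp_weight i = \sum_(l < n) (l == i) * cp_weight i.
  by rewrite (bigD1 i) //= eqxx mul1n big1 ?addn0 // => l /negbTE->.
rewrite /cp_potential /children [X in _ <= _ + X]big_mkcond -!big_split /=.
apply: leq_sum => l _.
have [-> | li] := eqVneq l i.
  rewrite (negbTE (wfN.1 i)) mul1n addn0 -mulnSr leq_mul2l /cp_rank.
  by rewrite -(cpt_differ_only_at wfN dio (wfN.1 i)); apply/orP; right.
rewrite addn0; case: ifP => il.
  by rewrite -mulnDr leq_mul2l /cp_rank ltnW ?orbT // ltn_addl.
by rewrite addn0 /cp_rank (cpt_differ_only_at wfN dio) ?il // agree.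
Qed.

Lemma potential_connect o o' :
  connect (improving_flip N) o o' -> cp_potential o' <= cp_potential o.
Proof.
apply: (homo_connect (r := geq) leqnn) => [y x z le_yx le_zy | x y].
  exact: leq_trans le_zy le_yx.
by move/potential_flip/ltnW.
Qed.

Lemma potential_better o' o : cp_better N o' o -> cp_potential o' < cp_potential o.
Proof.
case/existsP=> o1 /andP[flip /potential_connect].
by move/leq_ltn_trans; apply; apply: potential_flip.
Qed.

Lemma concept_at i (x : outcome n m * outcome n m) : differ_only_at i x.1 x.2 ->
  concept N x = prefers (cpt N i x.2) (x.1 i) (x.2 i).
Proof.
case: x => o o' /= dio; have [_ neq] := differ_only_at_agree dio.
apply/idP/idP => [/potential_better | pref]; last first.
  apply/existsP; exists o; rewrite connect0 andbT.
  by rewrite (@improving_flip_at _ _ N i) // differ_only_atC.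
apply: contraLR; rewrite -prefersNC 1?eq_sym // -(cpt_differ_only_at wfN dio (wfN.1 i)).
by rewrite -(improving_flip_at N dio) -leqNgt => /potential_flip/ltnW.
Qed.

Lemma concept_potential (x : outcome n m * outcome n m) : is_swap x.1 x.2 ->
  if concept N x then cp_potential x.1 < cp_potential x.2
  else cp_potential x.2 < cp_potential x.1.
Proof.
case/existsP=> i dio; case: ifP => [/potential_better // | ].
have [_ neq] := differ_only_at_agree dio.
rewrite (concept_at dio) => /negbT; rewrite -prefersNC 1?eq_sym //.
rewrite -(cpt_differ_only_at wfN dio (wfN.1 i)) -(improving_flip_at N dio).
exact: potential_flip.
Qed.

End Potential.

Section Forest.
Variable V : finType.
Implicit Types (S Y : {set V * V}) (e : V * V).

Definition undirected S : rel V := fun u v => ((u, v) \in S) || ((v, u) \in S).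
Definition component S x := [set y | connect (undirected S) x y].
Definition components S := [set component S x | x : V].

Definition potential_shattered Y := forall f : V * V -> bool, exists phi : V -> nat,
  forall x, x \in Y -> if f x then phi x.1 < phi x.2 else phi x.2 < phi x.1.

Lemma undirected_sym S : symmetric (undirected S).
Proof. by move=> u v; rewrite /undirected orbC. Qed.

Lemma components_setU1_lt S e :
  ~~ connect (undirected S) e.1 e.2 -> #|components (e |: S)| < #|components S|.
Proof.
move=> disconnected; set S' := e |: S.
pose merge (C : {set V}) := [set y | [exists x in C, connect (undirected S') x y]].
have S_S' : subrel (connect (undirected S)) (connect (undirected S')).
  apply: connect_sub => u v uv; apply: connect1.
  by move: uv; rewrite /undirected !inE => /orP[] ->; rewrite !orbT.
have merge_component x : merge (component S x) = component S' x.
  apply/setP => y; rewrite !inE; apply/existsP/idP => [[z] | xy].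
    by rewrite inE => /andP[/S_S']; apply: connect_trans.
  by exists x; rewrite inE connect0.
have -> : components S' = merge @: components S.
  by rewrite -imset_comp; apply: eq_imset => x /=; rewrite merge_component.
rewrite ltn_neqAle leq_imset_card andbT; apply: contra disconnected => /imset_injP inj.
have same12 : component S e.1 = component S e.2.
  apply: inj; rewrite ?imset_f // !merge_component; apply/setP => y; rewrite !inE.
  apply: same_connect1; first exact/sym_connect_sym/undirected_sym.
  by rewrite /undirected !inE -surjective_pairing eqxx.
have : e.2 \in component S e.2 by rewrite inE connect0.
by rewrite -same12 inE.
Qed.

Lemma potential_shattered_acyclic Y S e : potential_shattered Y ->
  S \subset Y -> e \in Y :\: S -> ~~ connect (undirected S) e.1 e.2.
Proof.
move=> shY sSY /setDP[eY eNS]; apply/negP => /connectP[p path_p].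
case/shortenP: path_p => s path_s uniq_s _ last_s.
(* Label e upwards and every other pair downwards along s: phi then decreases
   along the path from e.1 to e.2, against the label of e. *)
pose idx v := index v (e.1 :: s).
have [phi realizes] := shY (fun x => (x == e) || (idx x.2 < idx x.1)).
have e_up : phi e.1 < phi e.2 by have := realizes e eY; rewrite eqxx.
have down u v : undirected S u v -> idx u < idx v -> phi v < phi u.
  case/orP=> [uv | vu] lt_uv.
    have := realizes _ (subsetP sSY _ uv); rewrite /= ltnNge ltnW // orbF.
    by case: eqP => // uve; move: eNS; rewrite -uve uv.
  by have := realizes _ (subsetP sSY _ vu); rewrite /= lt_uv orbT.
have : path (fun u v => phi v < phi u) e.1 s.
  apply/(pathP e.1) => j lt_js; apply: down; first exact: (pathP e.1 path_s).
  by rewrite /idx -[nth e.1 s j]/(nth e.1 (e.1 :: s) j.+1) !index_uniq // ltnW.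
move/(order_path_min (fun _ _ _ xy yz => ltn_trans yz xy))/allP => decr.
have := mem_last e.1 s; rewrite -last_s inE => /predU1P[e21 | /decr].
  by move: e_up; rewrite e21 ltnn.
by rewrite ltnNge ltnW.
Qed.

Lemma potential_shattered_card Y : potential_shattered Y -> #|Y| <= #|V| - 1.
Proof.
move=> shY.
have forest S : S \subset Y -> #|S| + #|components S| <= #|V|.
  have [k] := ubnP #|S|; elim: k S => // k IH S ltSk sSY.
  have [-> | [e eS]] := set_0Vmem S.
    by rewrite cards0 add0n leq_imset_card.
  have sS'Y : S :\ e \subset Y := subset_trans (subD1set S e) sSY.
  have eYS' : e \in Y :\: (S :\ e) by rewrite !inE eqxx (subsetP sSY).
  have := components_setU1_lt (potential_shattered_acyclic shY sS'Y eYS').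
  move: (cardsD1 e S) ltSk; rewrite setD1K // eS => cardS ltSk.
  have := IH (S :\ e) _ sS'Y; lia.
have [-> | [x xY]] := set_0Vmem Y; first by rewrite cards0.
have : 0 < #|components Y| by apply/card_gt0P; exists (component Y x.1); apply: imset_f.
by have := forest Y (subxx Y); lia.
Qed.

End Forest.

Section UpperBounds.
Variables n m : nat.
Implicit Types Y : {set outcome n m * outcome n m}.

Lemma shattered_card_le k Y :
  {in Y, forall x, is_swap x.1 x.2} -> shattered k Y -> #|Y| <= m ^ n - 1.
Proof.
move=> swapsY shY; have -> : m ^ n = #|outcome n m| by rewrite card_ffun !card_ord.
apply: potential_shattered_card => f; have [N [[wfN [acN _]] realizes]] := shY f.
exists (cp_potential N) => x xY; rewrite -realizes //.
by move: (concept_potential wfN acN (swapsY x xY)); case: (concept N x).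
Qed.

Lemma cpt_const N : in_Cac 0 N -> forall i (o o' : outcome n m), cpt N i o = cpt N i o'.
Proof.
case=> [[_ [local _]] [_ bounded]] i o o'; apply: local => j.
by move: (bounded i); rewrite leqn0 => /eqP/cards0_eq->; rewrite inE.
Qed.

Lemma shattered0_flips_card i Y :
  shattered 0 Y -> #|[set x in Y | differ_only_at i x.1 x.2]| <= m - 1.
Proof.
set Yi := [set x in Y | _] => shY.
have [-> | [[o0 _] _]] := set_0Vmem Yi; first by rewrite cards0.
pose values (x : outcome n m * outcome n m) := (x.1 i, x.2 i).
have concept_values N x : in_Cac 0 N -> differ_only_at i x.1 x.2 ->
    concept N x = prefers (cpt N i o0) (values x).1 (values x).2.
  by move=> C0N dix; rewrite (concept_at C0N.1 C0N.2.1 dix) (cpt_const C0N i x.2 o0).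
have values_inj : {in Yi &, injective values}.
  move=> x y /setIdP[xY dix] /setIdP[yY diy] vxy; apply/eqP/negPn/negP => neq_xy.
  have [N [C0N realizes]] := shY (pred1 x).
  move: (realizes x xY) (realizes y yY); rewrite /= eqxx eq_sym (negbTE neq_xy).
  by rewrite !concept_values // vxy => ->.
rewrite -(card_in_imset values_inj) -[X in _ <= X - 1]card_ord.
apply: potential_shattered_card => f; have [N [C0N realizes]] := shY (fun x => f (values x)).
exists (fun v => val (cpt N i o0 v)) => _ /imsetP[x /setIdP[xY dix] ->].
have [_ neq] := differ_only_at_agree dix.
rewrite -(realizes x xY) concept_values //.
rewrite /prefers /=; case: ltngtP => // /val_inj/perm_inj eq_values.
by rewrite eq_values eqxx in neq.
Qed.

Lemma shattered0_card_le Y :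
  {in Y, forall x, is_swap x.1 x.2} -> shattered 0 Y -> #|Y| <= (m - 1) * n.
Proof.
move=> swapsY shY; rewrite -sum1_card.
apply: (@leq_trans (\sum_(x in Y) \sum_(i < n) (differ_only_at i x.1 x.2 : nat))).
  by apply: leq_sum => x /swapsY/existsP[i dix]; rewrite (bigD1 i) //= dix.
rewrite exchange_big /= mulnC -[n in n * _]card_ord -sum_nat_const.
apply: leq_sum => i _; apply: leq_trans (shattered0_flips_card i shY).
rewrite -sum1_card [X in X <= _]big_mkcond [X in _ <= X]big_mkcond leq_sum // => x _.
by rewrite inE; case: (x \in Y); case: (differ_only_at _ _ _).
Qed.

End UpperBounds.

Section Relevant.
Variables (I A : finType) (T : eqType) (g : {ffun I -> A} -> T).

Definition relevant (j : I) := [exists o1 : {ffun I -> A}, exists o2 : {ffun I -> A},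
  [forall l, (l != j) ==> (o1 l == o2 l)] && (g o1 != g o2)].

Lemma relevantP (j : I) : reflect
    (exists o1 o2 : {ffun I -> A}, (forall l, l != j -> o1 l = o2 l) /\ g o1 <> g o2)
  (relevant j).
Proof.
apply: (iffP existsP) => [[o1 /existsP[o2 /andP[/forallP agree /eqP neq]]] | ].
  by exists o1, o2; split=> // l lj; apply/eqP/(implyP (agree l)).
case=> o1 [o2 [agree neq]].
exists o1; apply/existsP; exists o2; apply/andP; split; last exact/eqP.
by apply/forallP => l; apply/implyP => /agree->.
Qed.

Lemma eq_on_relevant (o o' : {ffun I -> A}) :
  (forall j, relevant j -> o j = o' j) -> g o = g o'.
Proof.
have [d] := ubnP #|[set j | o j != o' j]|; elim: d o => // d IH o lt_d agree.
have [/setP same | [j]] := set_0Vmem [set j | o j != o' j].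
  by congr g; apply/ffunP => j; have := same j; rewrite !inE => /negbFE/eqP.
rewrite inE => neq_j; pose o1 := [ffun l => if l == j then o' j else o l].
have -> : g o = g o1.
  have /relevantP irrelevant_j : ~~ relevant j by apply: contra neq_j => /agree->.
  apply/eqP/negPn/negP => /eqP neq; apply: irrelevant_j; exists o, o1; split=> // l lj.
  by rewrite ffunE (negbTE lj).
apply: IH => [|l /agree]; last by rewrite /o1 ffunE; case: (l =P j) => [-> | _ ->].
have -> : [set l | o1 l != o' l] = [set l | o l != o' l] :\ j.
  by apply/setP => l; rewrite !inE ffunE; case: (l =P j) => [-> | _]; rewrite ?eqxx.
by move: lt_d; rewrite (cardsD1 j) inE neq_j.
Qed.

Lemma relevant_sub (Q : pred I) :
  (forall o o' : {ffun I -> A}, (forall j, Q j -> o j = o' j) -> g o = g o') ->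
  forall j, relevant j -> Q j.
Proof.
move=> localQ j /relevantP[o1 [o2 [agree neq]]]; apply/idPn => nQj; apply: neq.
by apply: localQ => l Ql; apply: agree; apply: contraNneq nQj => <-.
Qed.

End Relevant.

Section KeyPerm.
Variables (p : nat) (K : 'I_p -> nat).
Hypothesis K_inj : injective K.

Definition key_rank x := #|[set y | K y < K x]|.

Lemma key_rank_lt x : key_rank x < p.
Proof.
rewrite -[p]card_ord -cardsT; apply: proper_card; apply/properP.
by split; [exact: subsetT | exists x; rewrite !inE ?ltnn].
Qed.

Lemma key_rank_mono x y : K x < K y -> key_rank x < key_rank y.
Proof.
move=> lt_xy; apply: proper_card; apply/properP; split; last by exists x; rewrite !inE ?ltnn.
by apply/subsetP => z; rewrite !inE => /ltn_trans; apply.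
Qed.

Lemma key_rank_inj : injective (fun x => Ordinal (key_rank_lt x)).
Proof.
move=> x y /(congr1 val) /= eq_rank; apply: K_inj.
by case: (ltngtP (K x) (K y)) => // /key_rank_mono; rewrite eq_rank ltnn.
Qed.

Definition key_perm : {perm 'I_p} := perm key_rank_inj.

Lemma key_perm_lt x y : (key_perm x < key_perm y) = (K x < K y).
Proof.
rewrite !permE /=.
case: (ltngtP (K x) (K y)) => [/key_rank_mono // | /key_rank_mono/ltnW | /K_inj ->].
  by rewrite leqNgt => /negbTE.
by rewrite ltnn.
Qed.

End KeyPerm.

Section Zigzag.
Variables (m : nat) (b : nat -> bool).

(* a + 1 goes below all of 0, ..., a or above all of them, as [b a] demands. *)
Definition zigzag v := if v is a.+1 then (if b a then m - v else m + v) else m.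

Lemma zigzag_succ_lt a : a.+1 < m -> (zigzag a.+1 < zigzag a) = b a.
Proof.
rewrite /zigzag; case: a => [|a] lt_a; first by case: (b 0); lia.
by case: (b a.+1); case: (b a); lia.
Qed.

Lemma zigzag_inj : injective (fun v : 'I_m => zigzag v).
Proof.
move=> [v lt_v] [w lt_w] /=; rewrite /zigzag => eq_vw; apply: val_inj => /=.
by case: v lt_v eq_vw => [|v]; case: w lt_w => [|w]; try case: (b v); try case: (b w); lia.
Qed.

Definition zigzag_perm : {perm 'I_m} := key_perm zigzag_inj.

Lemma prefers_zigzag_succ (x y : 'I_m) : y = x.+1 :> nat -> prefers zigzag_perm y x = b x.
Proof. by move=> y_succ; rewrite /prefers key_perm_lt y_succ zigzag_succ_lt // -y_succ. Qed.

End Zigzag.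

Lemma sum_pow_minn m1 k N :
  \sum_(0 <= i < N) m1.+1 ^ minn i k * m1 + 1 = m1.+1 ^ minn N k + (N - k) * m1.+1 ^ k * m1.
Proof.
elim: N => [|N IH]; first by rewrite big_nil min0n.
rewrite big_nat_recr //= -addnA [_ * m1 + 1]addnC addnA IH.
have [lt_Nk | le_kN] := ltnP N k.
  rewrite (minn_idPl lt_Nk) expnS.
  have -> : N - k = 0 by lia.
  have -> : N.+1 - k = 0 by lia.
  by rewrite !mul0n !addn0 mulSn mulnC.
rewrite (minn_idPr (leqW le_kN)) subSn // mulSn; lia.
Qed.

Section LowerBound.
Variables n m1 k : nat.
Local Notation m := m1.+1.
Variable X : {set outcome n m * outcome n m}.
Hypothesis swapX : swap_space X.

Definition ctx_size (i : 'I_n) := minn i k.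

Lemma ctx_size_le_n i : ctx_size i <= n.
Proof. exact: leq_trans (geq_minl i k) (ltnW (ltn_ord i)). Qed.

Definition context i := {ffun 'I_(ctx_size i) -> 'I_m}.
Definition flip_data i : finType := (context i * 'I_m1)%type.
(* (i, (g, a)) stands for the swap of v_i between a and a + 1 in context g. *)
Definition flip_index := {i : 'I_n & flip_data i}.

Definition project i (o : outcome n m) : context i :=
  [ffun l => o (widen_ord (ctx_size_le_n i) l)].

Definition extend i (g : context i) (v : 'I_m) : outcome n m :=
  [ffun l => if insub (val l) is Some l' then g l' else if l == i then v else ord0].
Arguments extend : clear implicits.

Lemma project_extend i g v : project i (extend i g v) = g.
Proof. by apply/ffunP => l; rewrite !ffunE (_ : insub _ = Some l) //; apply: valK. Qed.

Lemma extend_at i g v : extend i g v i = v.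
Proof. by rewrite ffunE insubN ?eqxx // -leqNgt geq_minl. Qed.

Lemma extend_off i g v v' l : l != i -> extend i g v l = extend i g v' l.
Proof. by move=> li; rewrite !ffunE; case: insub => //; rewrite (negbTE li). Qed.

Definition flip_low (u : flip_index) :=
  extend (tag u) (tagged u).1 (widen_ord (leqnSn m1) (tagged u).2).
Definition flip_high (u : flip_index) := extend (tag u) (tagged u).1 (lift ord0 (tagged u).2).

Lemma differ_flip u : differ_only_at (tag u) (flip_low u) (flip_high u).
Proof.
apply/andP; split.
  by apply/forallP => l; apply/implyP => /(extend_off _ _ (lift ord0 (tagged u).2))->.
by rewrite !extend_at; apply/eqP => /(congr1 val); rewrite /= /bump leq0n => /n_Sn.
Qed.

Definition oriented u :=
  if (flip_low u, flip_high u) \in X then (flip_low u, flip_high u)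
  else (flip_high u, flip_low u).

Definition flips := [set oriented u | u : flip_index].

Lemma oriented_in u : oriented u \in X.
Proof.
rewrite /oriented; case: ifP => // lowX.
have swap_u : is_swap (flip_low u) (flip_high u).
  by apply/existsP; exists (tag u); apply: differ_flip.
by move: (swapX.2 _ _ swap_u); rewrite lowX.
Qed.

Lemma differ_oriented u : differ_only_at (tag u) (oriented u).1 (oriented u).2.
Proof.
by rewrite /oriented; case: ifP => _; last rewrite differ_only_atC; apply: differ_flip.
Qed.

Lemma project_oriented u :
  project (tag u) (oriented u).1 = (tagged u).1 /\
  project (tag u) (oriented u).2 = (tagged u).1.
Proof. by rewrite /oriented; case: ifP => _; rewrite !project_extend. Qed.

Lemma minn_oriented u :
  minn ((oriented u).1 (tag u)) ((oriented u).2 (tag u)) = (tagged u).2 :> nat.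
Proof. by rewrite /oriented; case: ifP => _; rewrite !extend_at /= /bump leq0n; lia. Qed.

Lemma oriented_inj : injective oriented.
Proof.
move=> [i [g a]] [j [g' a']] eq_uv.
have dj := differ_oriented (Tagged flip_data (g', a')); rewrite -eq_uv /= in dj.
have ij := differ_only_at_uniq (differ_oriented (Tagged flip_data (g, a))) dj; subst j.
have [pg _] := project_oriented (Tagged flip_data (g, a)).
have [pg' _] := project_oriented (Tagged flip_data (g', a')).
have ma := minn_oriented (Tagged flip_data (g, a)).
have ma' := minn_oriented (Tagged flip_data (g', a')).
rewrite -eq_uv /= in pg' ma'.
have -> : g' = g by rewrite -pg' pg.
by have -> : a' = a by apply: val_inj; rewrite /= -ma' ma.
Qed.

Lemma card_flips : k <= n -> #|flips| = m1 * (n - k) * m ^ k + m ^ k - 1.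
Proof.
move=> le_kn; rewrite card_imset; last exact: oriented_inj.
rewrite card_tagged sumnE big_map big_enum /=.
under eq_bigr do rewrite card_prod card_ffun !card_ord.
have := sum_pow_minn m1 k n; rewrite (minn_idPr le_kn).
by rewrite -(big_mkord xpredT (fun i => m ^ minn i k * m1)); lia.
Qed.

Variable f : outcome n m * outcome n m -> bool.

(* The preference of a + 1 over a in context g that realises f on the oriented swap. *)
Definition succ_preferred (u : flip_index) :=
  if (oriented u).1 == flip_high u then f (oriented u) else ~~ f (oriented u).

Definition succ_prefs i (g : context i) (t : nat) :=
  if insub t is Some a then succ_preferred (Tagged flip_data (g, a)) else false.

Definition net_cpt i (o : outcome n m) := zigzag_perm m (succ_prefs (project i o)).
Definition net_parents i := [set j | relevant (net_cpt i) j].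
Definition shattering_net := mkCPnet net_parents net_cpt.

Lemma net_cpt_local i (o o' : outcome n m) :
  (forall j : 'I_n, j < ctx_size i -> o j = o' j) -> net_cpt i o = net_cpt i o'.
Proof.
move=> agree; rewrite /net_cpt /project.
by rewrite (eq_ffun _ (fun l => agree (widen_ord (ctx_size_le_n i) l) (ltn_ord l))).
Qed.

Lemma net_parents_lt i j : j \in net_parents i -> j < ctx_size i.
Proof.
rewrite inE; apply: (relevant_sub (Q := fun j : 'I_n => j < ctx_size i)) => o o'.
exact: net_cpt_local.
Qed.

Lemma shattering_net_in : in_Cac k shattering_net.
Proof.
have edge_lt j i : cp_edge shattering_net j i -> j < i.
  by move/net_parents_lt/leq_trans; apply; apply: geq_minl.
split; [split; [|split] | split].
- by move=> i; apply/negP => /edge_lt; rewrite ltnn.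
- by move=> i o o' agree; apply: eq_on_relevant => j rj; apply: agree; rewrite inE.
- by move=> i j; rewrite inE => /relevantP.
- have le_connect : {homo val : x y / connect (cp_edge shattering_net) x y >-> x <= y}.
    by apply: homo_connect leqnn leq_trans _ => x y /edge_lt/ltnW.
  by move=> i j /edge_lt lt_ji; apply/negP => /le_connect; rewrite leqNgt lt_ji.
- move=> i; have sub : net_parents i \subset
      [set widen_ord (ctx_size_le_n i) l | l : 'I_(ctx_size i)].
    apply/subsetP => j /net_parents_lt lt_j; apply/imsetP; exists (Ordinal lt_j) => //.
    exact: val_inj.
  apply: leq_trans (subset_leq_card sub) _; apply: leq_trans (leq_imset_card _ _) _.
  by rewrite card_ord geq_minr.
Qed.

Lemma net_concept x : x \in flips -> concept shattering_net x = f x.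
Proof.
case/imsetP => -[i [g a]] _ ->; set u := Tagged flip_data (g, a).
have [wfN [acN _]] := shattering_net_in.
rewrite (concept_at wfN acN (differ_oriented u)) /= /net_cpt (project_oriented u).2.
set r := zigzag_perm _ _.
have [_ neq] := differ_only_at_agree (differ_flip u).
have : prefers r (flip_high u i) (flip_low u i) = succ_preferred u.
  rewrite prefers_zigzag_succ /succ_prefs ?extend_at /= ?/bump ?leq0n //.
  by rewrite (_ : insub _ = Some a) //; apply: valK.
rewrite /succ_preferred /oriented; case: (_ \in X) => /=; last by rewrite eqxx.
have neq_low_high : flip_low u != flip_high u by apply: contraNneq neq => ->.
by rewrite (negbTE neq_low_high) prefersNC 1?eq_sym // => /(congr1 negb); rewrite !negbK.
Qed.

End LowerBound.

Lemma VCD_ge_flips n m1 k (X : {set outcome n m1.+1 * outcome n m1.+1}) :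
  swap_space X -> k <= n -> VCD_ge k X (m1 * (n - k) * m1.+1 ^ k + m1.+1 ^ k - 1).
Proof.
move=> swapX le_kn; exists (flips k X); split; [|split].
- by apply/subsetP => _ /imsetP[u _ ->]; apply: oriented_in.
- move=> f; exists (shattering_net k X f); split; first exact: shattering_net_in.
  exact: net_concept.
- by rewrite card_flips.
Qed.

Lemma VCD_isP n m k (X : {set outcome n m * outcome n m}) d : VCD_ge k X d ->
  (forall Y : {set outcome n m * outcome n m}, Y \subset X -> shattered k Y -> #|Y| <= d) ->
  VCD_is k X d.
Proof.
move=> [Y [sYX [shY le_dY]]] upper; split=> //.
by exists Y; split=> //; split=> //; apply/eqP; rewrite eqn_leq le_dY upper.
Qed.

Theorem theorem1 (n m : nat) (hn : 1 <= n) (hm : 2 <= m)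
    (X : {set outcome n m * outcome n m}) (hX : swap_space X) :
  VCD_is (n - 1) X (m ^ n - 1) /\
  VCD_is 0 X ((m - 1) * n) /\
  (forall k : nat, k <= n - 1 ->
     VCD_ge k X ((m - 1) * (n - k) * m ^ k + m ^ k - 1)).
Proof.
case: m hm X hX => // m1 _ X hX; have -> : m1.+1 - 1 = m1 by rewrite subn1.
have swaps (Y : {set outcome n m1.+1 * outcome n m1.+1}) :
    Y \subset X -> {in Y, forall x, is_swap x.1 x.2}.
  by move=> sYX x /(subsetP sYX)/hX.1.
have lower k : k <= n - 1 -> VCD_ge k X (m1 * (n - k) * m1.+1 ^ k + m1.+1 ^ k - 1).
  by move=> le_k; apply: VCD_ge_flips; rewrite // (leq_trans le_k) ?leq_subr.
split; [|split] => //.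
- apply: VCD_isP => [|Y /swaps swapsY /(shattered_card_le swapsY) //].
  suff -> : m1.+1 ^ n = m1 * (n - (n - 1)) * m1.+1 ^ (n - 1) + m1.+1 ^ (n - 1).
    exact: lower.
  case: n hn {X hX swaps lower} => // n _.
  by rewrite subn1 /= subSn // subnn muln1 expnS mulSn addnC.
- apply: VCD_isP => [|Y /swaps swapsY /(shattered0_card_le swapsY)]; last by rewrite subn1.
  by have := lower 0 (leq0n _); rewrite subn0 expn0 muln1 addnK.
Qed.
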